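(* Let $\kappa$ be a regular cardinal. There is a $(\kappa,\kappa^+)$-Borel set (a subset of $\kappa^\kappa$) which is not $\kappa$-Borel.
   Context: For $X\subseteq\kappa$ with $|X|<\kappa$ and $\eta:X\to\kappa$, let $N_\eta=\{\zeta\in\kappa^\kappa\mid\eta\subseteq\zeta\}$; these sets and $\emptyset$ are the basic $\kappa$-open sets. For a cardinal $\lambda$, the $(\kappa,\lambda)$-Borel sets form the smallest class containing the basic $\kappa$-open sets and closed under complements, unions of at most $\lambda$ sets and intersections of at most $\lambda$ sets; $\kappa$-Borel means $(\kappa,\kappa)$-Borel. *)

(* Cardinals are modelled as well-ordered types. *)
Set Implicit Arguments.

Definition inj_le (A B : Type) : Prop :=
  exists f : A -> B, forall x y, f x = f y -> x = y.

Record strict_wellorder (T : Type) (R : T -> T -> Prop) : Prop := {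
  swo_wf : well_founded R;
  swo_irrefl : forall x, ~ R x x;
  swo_trans : forall x y z, R x y -> R y z -> R x z;
  swo_total : forall x y, R x y \/ x = y \/ R y x }.

(* (K, lt) is (the von Neumann ordinal of) a regular cardinal kappa:
   an infinite initial ordinal whose cofinal subsets all have size kappa. *)
Record regular_cardinal (K : Type) (lt : K -> K -> Prop) : Prop := {
  rc_wo : strict_wellorder lt;
  rc_infinite : inj_le nat K;
  rc_initial : forall a : K, ~ inj_le K {b : K | lt b a};
  rc_regular : forall X : K -> Prop,
      (forall a : K, exists x, X x /\ ~ lt x a) -> inj_le K {x : K | X x} }.

Definition le_kappa (K : Type) (I : Type) : Prop := inj_le I K.

(* |I| <= kappa^+ : I carries a well-order all of whose proper initial
   segments have size <= kappa (equivalently, I injects into kappa^+). *)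
Definition le_kappa_plus (K : Type) (I : Type) : Prop :=
  exists R : I -> I -> Prop, strict_wellorder R /\
    forall i : I, inj_le {j : I | R j i} K.

Definition N_basic (K : Type) (X : K -> Prop) (eta : {x : K | X x} -> K)
  : (K -> K) -> Prop :=
  fun zeta => forall x : {x : K | X x}, zeta (proj1_sig x) = eta x.

(* (kappa, lambda)-Borel subsets of kappa^kappa; "small I" means |I| <= lambda.
   The class is closed under extensional equality of sets. *)
Inductive borel (K : Type) (small : Type -> Prop) : ((K -> K) -> Prop) -> Prop :=
| borel_empty : borel small (fun _ => False)
| borel_basic : forall (X : K -> Prop) (eta : {x : K | X x} -> K),
    ~ inj_le K {x : K | X x} ->
    borel small (@N_basic K X eta)
| borel_compl : forall A, borel small A -> borel small (fun z => ~ A z)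
| borel_union : forall (I : Type) (F : I -> (K -> K) -> Prop),
    small I -> (forall i, borel small (F i)) ->
    borel small (fun z => exists i, F i z)
| borel_inter : forall (I : Type) (F : I -> (K -> K) -> Prop),
    small I -> (forall i, borel small (F i)) ->
    borel small (fun z => forall i, F i z)
| borel_ext : forall A B, borel small A -> (forall z, A z <-> B z) ->
    borel small B.

Arguments borel K small _ : clear implicits.

From Stdlib Require Import Classical ClassicalEpsilon FunctionalExtensionality
  PropExtensionality ProofIrrelevance Wellfounded Relation_Operators.

(* A kappa-Borel set has a code: a well-founded kappa-branching tree whose
   leaves are conditions x(j) = k and whose inner nodes are NORs. Using a
   pairing function on kappa (Hessenberg), such codes are in turn coded by
   points of kappa^kappa. The diagonal set of points x that code a code c with
   x outside the set coded by c is not kappa-Borel: if it were coded by c, a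
   point coding c would lie in it iff it does not. But for each code d the
   points of the diagonal set whose code has rank at most that of d form a
   kappa-Borel set, defined by recursion on d, and there are at most kappa^+
   ranks, so the diagonal set is (kappa, kappa^+)-Borel. *)

Lemma sig_eq {T : Type} {P : T -> Prop} (x y : {t | P t}) :
  proj1_sig x = proj1_sig y -> x = y.
Proof. destruct x, y; simpl; intros ->; f_equal; apply proof_irrelevance. Qed.

Lemma partial_inverse {A B : Type} (f : A -> B) :
  (forall a a', f a = f a' -> a = a') ->
  exists g : B -> option A, forall a b, g b = Some a <-> f a = b.
Proof.
  intros Hf.
  exists (fun b => match excluded_middle_informative (exists a, f a = b) with
           | left H => Some (proj1_sig (constructive_indefinite_description _ H))
           | right _ => None end).
  intros a b. destruct excluded_middle_informative as [H|H]; split; intro E.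
  - injection E as <-. exact (proj2_sig (constructive_indefinite_description _ H)).
  - f_equal. apply Hf. rewrite (proj2_sig (constructive_indefinite_description _ H)). auto.
  - discriminate.
  - exfalso. eauto.
Qed.

Lemma slexprod_fst {A B : Type} {RA : A -> A -> Prop} {RB : B -> B -> Prop} {p q} :
  slexprod A B RA RB p q -> RA (fst p) (fst q) \/ fst p = fst q.
Proof. destruct 1; simpl; auto. Qed.

Lemma slexprod_total {A B : Type} {RA : A -> A -> Prop} {RB : B -> B -> Prop} :
  (forall a a', RA a a' \/ a = a' \/ RA a' a) ->
  (forall b b', RB b b' \/ b = b' \/ RB b' b) ->
  forall p q, slexprod A B RA RB p q \/ p = q \/ slexprod A B RA RB q p.
Proof.
  intros HA HB [a b] [a' b'].
  destruct (HA a a') as [H|[<-|H]]; [left; now left| |right; right; now left].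
  destruct (HB b b') as [H|[<-|H]]; [left; now right|auto|right; right; now right].
Qed.

Lemma borel_mono (K : Type) (s1 s2 : Type -> Prop) A :
  (forall I, s1 I -> s2 I) -> borel K s1 A -> borel K s2 A.
Proof.
  intros Hs. induction 1.
  - apply borel_empty.
  - apply borel_basic; auto.
  - apply borel_compl; auto.
  - apply borel_union; auto.
  - apply borel_inter; auto.
  - eapply borel_ext; eauto.
Qed.

Section RegularCardinal.

Variable K : Type.
Variable lt : K -> K -> Prop.
Hypothesis hK : regular_cardinal lt.

Lemma lt_wf : well_founded lt. Proof. exact (swo_wf (rc_wo hK)). Qed.
Lemma lt_irrefl a : ~ lt a a. Proof. exact (swo_irrefl (rc_wo hK) a). Qed.
Lemma lt_trans a b c : lt a b -> lt b c -> lt a c. Proof. exact (swo_trans (rc_wo hK) a b c). Qed.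
Lemma lt_total a b : lt a b \/ a = b \/ lt b a. Proof. exact (swo_total (rc_wo hK) a b). Qed.

Definition natK : nat -> K :=
  proj1_sig (constructive_indefinite_description _ (rc_infinite hK)).

Lemma natK_inj {n m} : natK n = natK m -> n = m.
Proof. exact (proj2_sig (constructive_indefinite_description _ (rc_infinite hK)) n m). Qed.

Lemma natK_neq {n m} : n <> m -> natK n <> natK m.
Proof. intros H E. exact (H (natK_inj E)). Qed.

(** * Small sets and pairing *)

Definition small (T : Type) : Prop := ~ inj_le K T.

Lemma small_inj {A B : Type} : inj_le A B -> small B -> small A.
Proof.
  intros [f Hf] HB [g Hg]. apply HB.
  exists (fun k => f (g k)). intros k k' E. apply Hg, Hf, E.
Qed.

Lemma small_sub {T : Type} (P Q : T -> Prop) :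
  (forall t, P t -> Q t) -> small {t | Q t} -> small {t | P t}.
Proof.
  intros HPQ. apply small_inj.
  exists (fun t => exist Q (proj1_sig t) (HPQ _ (proj2_sig t))).
  intros t t' E. apply sig_eq. exact (f_equal (@proj1_sig _ _) E).
Qed.

Lemma small_bounded (X : K -> Prop) : small {x | X x} -> exists a, forall x, X x -> lt x a.
Proof.
  intros HX. apply NNPP. intro Hunb. apply HX, (rc_regular hK). intro a.
  apply NNPP. intro Ha. apply Hunb. exists a. intros x Hx.
  destruct (classic (lt x a)) as [H|H]; [exact H|]. exfalso. eauto.
Qed.

Lemma small_singleton {T : Type} (t0 : T) : small {t | t = t0}.
Proof.
  intros [f Hf]. apply (natK_neq (n := 0) (m := 1)); [discriminate|].
  apply Hf, sig_eq. rewrite (proj2_sig (f (natK 0))), (proj2_sig (f (natK 1))). reflexivity.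
Qed.

Lemma small_bool : small bool.
Proof.
  intros [f Hf].
  assert (Hneq : forall n m, n <> m -> f (natK n) <> f (natK m)).
  { intros n m Hnm E. exact (natK_neq Hnm (Hf _ _ E)). }
  destruct (f (natK 0)) eqn:E0, (f (natK 1)) eqn:E1, (f (natK 2)) eqn:E2;
    solve [ apply (Hneq 0 1); congruence | apply (Hneq 0 2); congruence
          | apply (Hneq 1 2); congruence ].
Qed.

Lemma small_image {T U : Type} (f : T -> U) : small T -> small {u | exists t, f t = u}.
Proof.
  intros HT [g Hg]. apply HT.
  destruct (choice (fun k t => f t = proj1_sig (g k))) as [s Hs].
  { intro k. exact (proj2_sig (g k)). }
  exists s. intros k k' E. apply Hg, sig_eq. rewrite <- (Hs k), <- (Hs k'), E. reflexivity.
Qed.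

(* Each member of the union meets the range of an injection from K in a
   bounded set, and by regularity these bounds are bounded too. *)
Lemma small_union {T J : Type} (S : J -> T -> Prop) :
  small J -> (forall j, small {t | S j t}) -> small {t | exists j, S j t}.
Proof.
  intros HJ HS [g Hg].
  assert (Hfib : forall j, exists m, forall k, S j (proj1_sig (g k)) -> lt k m).
  { intro j. apply small_bounded. refine (small_inj _ (HS j)).
    exists (fun k => exist (S j) (proj1_sig (g (proj1_sig k))) (proj2_sig k)).
    intros k k' E. apply sig_eq, Hg, sig_eq. exact (f_equal (@proj1_sig _ _) E). }
  destruct (choice _ Hfib) as [m Hm].
  destruct (small_bounded (fun a => exists j, m j = a)) as [M HM].
  { exact (small_image m HJ). }
  destruct (proj2_sig (g M)) as [j Hj].
  apply (lt_irrefl M), lt_trans with (m j); [apply Hm, Hj | apply HM; eauto].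
Qed.

Lemma small_prod {A B : Type} (P : A -> Prop) (Q : B -> Prop) :
  small {a | P a} -> small {b | Q b} -> small {p : A * B | P (fst p) /\ Q (snd p)}.
Proof.
  intros HP HQ.
  apply small_sub with
    (Q := fun p => exists a : {a | P a}, exists b : {b | Q b}, (proj1_sig a, proj1_sig b) = p).
  - intros [a b] [Ha Hb]. exists (exist _ a Ha), (exist _ b Hb). reflexivity.
  - apply small_union; [exact HP|]. intro a. exact (small_image _ HQ).
Qed.

Definition kle (a b : K) : Prop := lt a b \/ a = b.

Lemma kle_trans a b c : kle a b -> kle b c -> kle a c.
Proof. unfold kle. intros [H|<-] [H'|<-]; eauto using lt_trans. Qed.

Lemma small_kle (m : K) : small {x | kle x m}.
Proof.
  apply small_sub with (Q := fun x => exists b : bool, if b then lt x m else x = m).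
  - intros x [H|H]; [exists true|exists false]; exact H.
  - apply small_union; [exact small_bool|]. intros [|].
    + exact (rc_initial hK m).
    + apply small_singleton.
Qed.

(* Transfinite recursion: send each point above the (bounded, by regularity)
   image of its initial segment. *)
Lemma small_segments_embed {T : Type} {R : T -> T -> Prop} :
  well_founded R -> (forall q, small {p | R p q}) ->
  exists f : T -> K, forall p q, R p q -> lt (f p) (f q).
Proof.
  intros Rwf Hseg.
  set (step := fun q (rec : forall p, R p q -> K) =>
         epsilon (inhabits (natK 0)) (fun k => forall p (H : R p q), lt (rec p H) k)).
  set (f := Fix Rwf (fun _ => K) step).
  assert (Hf : forall q, f q = step q (fun p _ => f p)).
  { intro q. apply (Fix_eq Rwf (fun _ => K) step). intros x g g' E.
    replace g' with g; [reflexivity|]. extensionality p. extensionality H. apply E. }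
  exists f. intros p q H. rewrite (Hf q). unfold step.
  apply (epsilon_spec (inhabits (natK 0)) (fun k => forall p, R p q -> lt (f p) k)); [|exact H].
  destruct (small_bounded (fun k => exists p : {p | R p q}, f (proj1_sig p) = k)) as [M HM].
  { exact (small_image _ (Hseg q)). }
  exists M. intros p' Hp'. apply HM. exists (exist _ p' Hp'). reflexivity.
Qed.

Definition kmax (a b : K) : K := if excluded_middle_informative (lt a b) then b else a.

Lemma kle_kmax_l a b : kle a (kmax a b).
Proof. unfold kmax, kle. destruct excluded_middle_informative; auto. Qed.

Lemma kle_kmax_r a b : kle b (kmax a b).
Proof.
  unfold kmax, kle. destruct excluded_middle_informative as [H|H]; auto.
  destruct (lt_total a b) as [H'|[<-|H']]; auto. contradiction.
Qed.

Definition max_lex (p q : K * K) : Prop :=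
  slexprod K (K * K) lt (slexprod K K lt lt)
    (kmax (fst p) (snd p), p) (kmax (fst q) (snd q), q).

Lemma max_lex_wf : well_founded max_lex.
Proof.
  apply (wf_inverse_image _ _ _ (fun p => (kmax (fst p) (snd p), p))).
  apply wf_slexprod; [|apply wf_slexprod]; exact lt_wf.
Qed.

Lemma max_lex_total p q : max_lex p q \/ p = q \/ max_lex q p.
Proof.
  destruct (slexprod_total lt_total (slexprod_total lt_total lt_total)
              (kmax (fst p) (snd p), p) (kmax (fst q) (snd q), q)) as [H|[E|H]]; auto.
  right; left. exact (f_equal snd E).
Qed.

Lemma small_max_lex_segment q : small {p | max_lex p q}.
Proof.
  set (m := kmax (fst q) (snd q)).
  apply small_sub with (Q := fun p : K * K => kle (fst p) m /\ kle (snd p) m).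
  - intros p Hp. assert (Hm : kle (kmax (fst p) (snd p)) m) by exact (slexprod_fst Hp).
    split; (eapply kle_trans; [|exact Hm]); [apply kle_kmax_l|apply kle_kmax_r].
  - exact (small_prod (fun a => kle a m) (fun b => kle b m) (small_kle m) (small_kle m)).
Qed.

Lemma K_pairing : exists f : K * K -> K, forall p q, f p = f q -> p = q.
Proof.
  destruct (small_segments_embed max_lex_wf small_max_lex_segment) as [f Hf].
  exists f. intros p q E.
  destruct (max_lex_total p q) as [H|[H|H]]; auto;
    apply Hf in H; rewrite E in H; destruct (lt_irrefl _ H).
Qed.

Definition pair (a b : K) : K :=
  proj1_sig (constructive_indefinite_description _ K_pairing) (a, b).

Lemma pair_inj a b a' b' : pair a b = pair a' b' -> a = a' /\ b = b'.
Proof.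
  intro E. apply (proj2_sig (constructive_indefinite_description _ K_pairing)) in E.
  injection E. auto.
Qed.

Definition le_kappa_on {T : Type} (S : T -> Prop) : Prop :=
  exists f : T -> K, forall t t', S t -> S t' -> f t = f t' -> t = t'.

Lemma le_kappa_on_sig {T : Type} (S : T -> Prop) : le_kappa_on S -> le_kappa K {t | S t}.
Proof.
  intros [f Hf]. exists (fun t => f (proj1_sig t)). intros t t' E.
  apply sig_eq, Hf; [exact (proj2_sig t)|exact (proj2_sig t')|exact E].
Qed.

Lemma le_kappa_on_sub {T : Type} (S S' : T -> Prop) :
  (forall t, S t -> S' t) -> le_kappa_on S' -> le_kappa_on S.
Proof. intros H [f Hf]. exists f. auto. Qed.

Lemma le_kappa_on_singleton {T : Type} (t0 : T) : le_kappa_on (fun t => t = t0).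
Proof. exists (fun _ => natK 0). intros t t' -> -> _. reflexivity. Qed.

Lemma le_kappa_on_union {T J : Type} (S : J -> T -> Prop) :
  le_kappa K J -> (forall j, le_kappa_on (S j)) -> le_kappa_on (fun t => exists j, S j t).
Proof.
  intros [psi Hpsi] HS. destruct (choice _ HS) as [phi Hphi].
  exists (fun t => match excluded_middle_informative (exists j, S j t) with
           | left H => let j := proj1_sig (constructive_indefinite_description _ H) in
                       pair (psi j) (phi j t)
           | right _ => natK 0 end).
  intros t t' Ht Ht' E.
  destruct excluded_middle_informative as [H|]; [|contradiction].
  destruct excluded_middle_informative as [H'|]; [|contradiction].
  destruct (constructive_indefinite_description _ H) as [j Hj].
  destruct (constructive_indefinite_description _ H') as [j' Hj'].
  simpl in E. apply pair_inj in E as [Ej E]. apply Hpsi in Ej. subst j'.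
  exact (Hphi j t t' Hj Hj' E).
Qed.

Lemma le_kappa_K : le_kappa K K.
Proof. exists (fun k => k). auto. Qed.

Lemma le_kappa_bool : le_kappa K bool.
Proof.
  exists (fun b : bool => if b then natK 1 else natK 0).
  intros [|] [|] E; auto; apply natK_inj in E; discriminate.
Qed.

Lemma le_kappa_le_kappa_plus (I : Type) : le_kappa K I -> le_kappa_plus K I.
Proof.
  intros [f Hf]. exists (fun i j => lt (f i) (f j)). split.
  - constructor.
    + exact (wf_inverse_image _ _ _ f lt_wf).
    + intro i. apply lt_irrefl.
    + intros i j k. apply lt_trans.
    + intros i j. destruct (lt_total (f i) (f j)) as [H|[H|H]]; auto.
  - intro i. exists (fun j => f (proj1_sig j)). intros j j' E. apply sig_eq, Hf, E.
Qed.

Local Notation kappa_borel := (borel K (le_kappa K)).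

Lemma borel_or A B : kappa_borel A -> kappa_borel B -> kappa_borel (fun x => A x \/ B x).
Proof.
  intros HA HB. apply borel_ext with (fun x => exists b : bool, (if b then A else B) x).
  - apply (borel_union (fun (b : bool) => if b then A else B)); [exact le_kappa_bool|].
    intros [|]; assumption.
  - intro x. split; [intros [[|] H]; auto | intros [H|H]; [exists true|exists false]; exact H].
Qed.

Lemma borel_and A B : kappa_borel A -> kappa_borel B -> kappa_borel (fun x => A x /\ B x).
Proof.
  intros HA HB. apply borel_ext with (fun x => forall b : bool, (if b then A else B) x).
  - apply (borel_inter (fun (b : bool) => if b then A else B)); [exact le_kappa_bool|].
    intros [|]; assumption.
  - intro x. split; [intro H; exact (conj (H true) (H false)) | intros [HA' HB'] [|]; assumption].
Qed.

Lemma borel_exK (F : K -> (K -> K) -> Prop) :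
  (forall i, kappa_borel (F i)) -> kappa_borel (fun x => exists i, F i x).
Proof. intro H. exact (borel_union F le_kappa_K H). Qed.

Lemma borel_allK (F : K -> (K -> K) -> Prop) :
  (forall i, kappa_borel (F i)) -> kappa_borel (fun x => forall i, F i x).
Proof. intro H. exact (borel_inter F le_kappa_K H). Qed.

Lemma borel_eval (a k : K) : kappa_borel (fun x => x a = k).
Proof.
  apply borel_ext with (N_basic (fun z => z = a) (fun _ => k)).
  - apply borel_basic, small_singleton.
  - intro x. unfold N_basic. split.
    + intro H. exact (H (exist _ a eq_refl)).
    + intros H [z ->]. exact H.
Qed.

Lemma borel_eval_eval (a b : K) : kappa_borel (fun x => x (x a) = x b).
Proof.
  apply borel_ext with (fun x => exists j, x a = j /\ exists k, x j = k /\ x b = k).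
  - apply borel_exK. intro j. apply borel_and; [apply borel_eval|].
    apply borel_exK. intro k. apply borel_and; apply borel_eval.
  - intro x. split.
    + intros [j [<- [k [E1 E2]]]]. congruence.
    + intro E. exists (x a). split; [reflexivity|]. exists (x b). auto.
Qed.

(** * Borel codes *)

Inductive code : Type :=
| Emp : code
| Atom : K -> K -> code
| Nor : (K -> code) -> code.

Fixpoint sem (c : code) (x : K -> K) : Prop :=
  match c with
  | Emp => False
  | Atom j k => x j = k
  | Nor f => ~ exists i, sem (f i) x
  end.

Definition code_compl (c : code) : code := Nor (fun _ => c).
Definition code_full : code := code_compl Emp.
Definition code_union (f : K -> code) : code := code_compl (Nor f).
Definition code_inter (f : K -> code) : code := Nor (fun i => code_compl (f i)).

Lemma sem_compl c x : sem (code_compl c) x <-> ~ sem c x.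
Proof.
  simpl. split.
  - intros H Hc. apply H. exists (natK 0). exact Hc.
  - intros H [_ Hc]. exact (H Hc).
Qed.

Lemma sem_full x : sem code_full x.
Proof. apply sem_compl. intros []. Qed.

Lemma sem_union f x : sem (code_union f) x <-> exists i, sem (f i) x.
Proof.
  unfold code_union. rewrite sem_compl. simpl.
  split; [apply NNPP | intros H H'; exact (H' H)].
Qed.

Lemma sem_inter f x : sem (code_inter f) x <-> forall i, sem (f i) x.
Proof.
  simpl. split.
  - intros H i. apply NNPP. intro Hi. apply H. exists i. apply sem_compl, Hi.
  - intros H [i Hi]. apply sem_compl in Hi. exact (Hi (H i)).
Qed.

Lemma coded_family_reindex {I : Type} (F : I -> (K -> K) -> Prop) (c0 : code) :
  le_kappa K I -> (forall i, exists c, forall x, F i x <-> sem c x) ->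
  exists cf : K -> code,
    (forall i, exists k, forall x, F i x <-> sem (cf k) x) /\
    (forall k, cf k = c0 \/ exists i, forall x, F i x <-> sem (cf k) x).
Proof.
  intros [g Hg] HF. destruct (choice _ HF) as [cI HcI].
  destruct (partial_inverse g Hg) as [ginv Hginv].
  exists (fun k => match ginv k with Some i => cI i | None => c0 end). split.
  - intro i. exists (g i). rewrite (proj2 (Hginv i (g i)) eq_refl). apply HcI.
  - intro k. destruct (ginv k) as [i|]; [right; exists i; apply HcI | left; reflexivity].
Qed.

Lemma kappa_borel_coded A : kappa_borel A -> exists c, forall x, A x <-> sem c x.
Proof.
  induction 1 as [|X eta _|A _ [c Hc]|I F HI _ IH|I F HI _ IH|A B _ [c Hc] HAB].
  - exists Emp. simpl. tauto.
  -
    exists (code_inter (fun k => match excluded_middle_informative (X k) with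
                                 | left Hk => Atom k (eta (exist X k Hk))
                                 | right _ => code_full end)).
    intro x. rewrite sem_inter. unfold N_basic. split.
    + intros H k. destruct excluded_middle_informative as [Hk|Hk].
      * exact (H (exist X k Hk)).
      * apply sem_full.
    + intros H [k Hk]. specialize (H k).
      destruct excluded_middle_informative as [Hk'|]; [|contradiction].
      simpl in *. rewrite H. f_equal. apply sig_eq. reflexivity.
  - exists (code_compl c). intro x. rewrite sem_compl, Hc. reflexivity.
  - destruct (coded_family_reindex F Emp HI IH) as [cf [Hcov Hpad]].
    exists (code_union cf). intro x. rewrite sem_union. split.
    + intros [i Hi]. destruct (Hcov i) as [k Hk]. exists k. apply Hk, Hi.
    + intros [k Hk]. destruct (Hpad k) as [E|[i Hi]].
      * rewrite E in Hk. destruct Hk.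
      * exists i. apply Hi, Hk.
  - destruct (coded_family_reindex F code_full HI IH) as [cf [Hcov Hpad]].
    exists (code_inter cf). intro x. rewrite sem_inter. split.
    + intros H k. destruct (Hpad k) as [E|[i Hi]].
      * rewrite E. apply sem_full.
      * apply Hi, H.
    + intros H i. destruct (Hcov i) as [k Hk]. apply Hk, H.
  - exists c. intro x. rewrite <- HAB. apply Hc.
Qed.

(* Pairing splits kappa into slots for the data at the root of a code and
   disjoint copies of kappa, one for each subtree. *)
Definition slot (n : nat) : K := pair (natK 0) (natK n).
Definition child_pos (i z : K) : K := pair (natK 1) (pair i z).

Lemma slot_inj n m : slot n = slot m -> n = m.
Proof. intro E. apply pair_inj in E as [_ E]. exact (natK_inj E). Qed.

Lemma child_pos_neq_slot i z n : child_pos i z <> slot n.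
Proof. intro E. apply pair_inj in E as [E _]. apply natK_inj in E. discriminate. Qed.

Fixpoint codes (y : K -> K) (c : code) : Prop :=
  match c with
  | Emp => y (slot 0) = natK 0
  | Atom j k => y (slot 0) = natK 1 /\ y (slot 1) = j /\ y (slot 2) = k
  | Nor f => y (slot 0) = natK 2 /\ forall i, codes (fun z => y (child_pos i z)) (f i)
  end.

Definition code_tag (c : code) : nat :=
  match c with Emp => 0 | Atom _ _ => 1 | Nor _ => 2 end.

Lemma codes_tag {y c} : codes y c -> y (slot 0) = natK (code_tag c).
Proof. destruct c; simpl; tauto. Qed.

Lemma codes_unique {y c c'} : codes y c -> codes y c' -> c = c'.
Proof.
  revert y c'. induction c as [|j k|f IH]; intros y c' H H';
    assert (Etag := natK_inj (eq_trans (eq_sym (codes_tag H)) (codes_tag H')));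
    destruct c' as [|j' k'|f']; try discriminate Etag; simpl in *.
  - reflexivity.
  - destruct H as (_ & <- & <-), H' as (_ & <- & <-). reflexivity.
  - f_equal. extensionality i. exact (IH i _ _ (proj2 H i) (proj2 H' i)).
Qed.

Lemma codes_exists c : exists y, codes y c.
Proof.
  induction c as [|j k|f IH].
  - exists (fun _ => natK 0). reflexivity.
  - exists (fun z => if excluded_middle_informative (z = slot 0) then natK 1
             else if excluded_middle_informative (z = slot 1) then j else k).
    assert (Hslots : slot 1 <> slot 0 /\ slot 2 <> slot 0 /\ slot 2 <> slot 1).
    { repeat split; intro E; apply slot_inj in E; discriminate. }
    simpl. repeat split; repeat destruct excluded_middle_informative; intuition congruence.
  - destruct (choice _ IH) as [yf Hyf].
    assert (Hinj : forall p q : K * K, child_pos (fst p) (snd p) = child_pos (fst q) (snd q) -> p = q).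
    { intros [i z] [i' z'] E. simpl in E.
      apply pair_inj in E as [_ E]. apply pair_inj in E as [-> ->].
      reflexivity. }
    destruct (partial_inverse _ Hinj) as [pos Hpos].
    exists (fun z => match pos z with Some p => yf (fst p) (snd p) | None => natK 2 end).
    simpl. split.
    + destruct (pos (slot 0)) as [p|] eqn:E; [|reflexivity].
      apply Hpos in E. destruct (child_pos_neq_slot _ _ _ E).
    + intro i. replace (fun z => match pos (child_pos i z) with
                                 | Some p => yf (fst p) (snd p) | None => natK 2 end) with (yf i).
      * apply Hyf.
      * extensionality z.
        assert (E : pos (child_pos i z) = Some (i, z)) by (apply Hpos; reflexivity).
        rewrite E. reflexivity.
Qed.

Definition diag (x : K -> K) : Prop := exists c, codes x c /\ ~ sem c x.

Lemma diag_not_kappa_borel : ~ kappa_borel diag.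
Proof.
  intro HB. destruct (kappa_borel_coded _ HB) as [c Hc]. destruct (codes_exists c) as [y Hy].
  assert (Hdiag : diag y <-> ~ sem c y).
  { split.
    - intros [c' [Hc' Hs]]. rewrite (codes_unique Hy Hc'). exact Hs.
    - intro Hs. exists c. auto. }
  rewrite Hc in Hdiag. tauto.
Qed.

(** * Ranks of codes *)

Fixpoint rank_le (c d : code) : Prop :=
  match c, d with
  | Nor f, Nor g => forall i, exists j, rank_le (f i) (g j)
  | Nor _, _ => False
  | _, _ => True
  end.

Definition rank_lt (c d : code) : Prop :=
  match d with Nor g => exists j, rank_le c (g j) | _ => False end.

Lemma rank_le_refl c : rank_le c c.
Proof. induction c; simpl; eauto. Qed.

Lemma rank_le_trans c : forall d e, rank_le c d -> rank_le d e -> rank_le c e.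
Proof.
  induction c as [| |f IH]; intros [| |g] [| |h]; simpl; try tauto.
  intros Hfg Hgh i. destruct (Hfg i) as [j Hj]. destruct (Hgh j) as [k Hk]. eauto.
Qed.

Lemma rank_lt_le c : forall d, rank_lt c d -> rank_le c d.
Proof.
  induction c as [| |f IH]; intros [| |g]; simpl; try tauto.
  intros [j Hj] i. exists j. apply IH.
  destruct (g j) as [| |g']; simpl in *; [destruct Hj .. | apply Hj].
Qed.

Lemma rank_le_lt_trans c d e : rank_le c d -> rank_lt d e -> rank_lt c e.
Proof.
  destruct e as [| |h]; simpl; try tauto.
  intros Hcd [k Hk]. exists k. eapply rank_le_trans; eauto.
Qed.

Lemma rank_lt_le_trans c d e : rank_lt c d -> rank_le d e -> rank_lt c e.
Proof.
  destruct d as [| |g], e as [| |h]; simpl; try tauto.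
  intros [j Hj] Hgh. destruct (Hgh j) as [k Hk]. exists k. eapply rank_le_trans; eauto.
Qed.

Lemma rank_le_Acc d : forall c, rank_le c d -> Acc rank_lt c.
Proof.
  induction d as [| |g IH]; intros c Hcd; constructor; intros c' Hlt;
    destruct c as [| |f]; simpl in *; try tauto.
  destruct Hlt as [i Hi]. destruct (Hcd i) as [j Hj].
  apply (IH j). eapply rank_le_trans; eauto.
Qed.

Lemma rank_lt_wf : well_founded rank_lt.
Proof. intro c. exact (rank_le_Acc c c (rank_le_refl c)). Qed.

Lemma rank_lt_irrefl c : ~ rank_lt c c.
Proof. induction (rank_lt_wf c) as [c _ IH]. intro H. exact (IH c H H). Qed.

Lemma rank_le_Nor g d : (forall j, rank_lt (g j) d) -> rank_le (Nor g) d.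
Proof. destruct d; simpl; [intro H; destruct (H (natK 0)) .. | tauto]. Qed.

Lemma rank_le_or_lt c : forall d, rank_le c d \/ rank_lt d c.
Proof.
  induction c as [| |f IH]; intro d; [left; exact I | left; exact I |].
  destruct d as [| |g]; [right; exists (natK 0); exact I .. |].
  destruct (classic (forall i, exists j, rank_le (f i) (g j))) as [H|H]; [left; exact H|].
  right. apply not_all_ex_not in H as [i Hi]. exists i. apply rank_le_Nor. intro j.
  destruct (IH i (g j)) as [H|H]; [exfalso; eauto | exact H].
Qed.

Definition rank_class (d : code) : code -> Prop := fun c => rank_le c d /\ rank_le d c.

Definition rank : Type := {P : code -> Prop | exists d, P = rank_class d}.

Definition rank_of (d : code) : rank := exist _ (rank_class d) (ex_intro _ d eq_refl).

Lemma rank_of_surj (P : rank) : exists d, P = rank_of d.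
Proof. destruct P as [P [d ->]]. exists d. reflexivity. Qed.

Lemma rank_of_eq c d : rank_of c = rank_of d <-> rank_le c d /\ rank_le d c.
Proof.
  split.
  - intro E. assert (Hc : rank_class c c) by (split; apply rank_le_refl).
    apply (f_equal (@proj1_sig _ _)) in E. simpl in E. rewrite E in Hc.
    destruct Hc as [H1 H2]. auto.
  - intros [Hcd Hdc]. apply sig_eq. simpl. extensionality e. apply propositional_extensionality.
    unfold rank_class. split; intros [H1 H2]; split; eapply rank_le_trans; eauto.
Qed.

Definition rank_ord (P Q : rank) : Prop :=
  exists c d, P = rank_of c /\ Q = rank_of d /\ rank_lt c d.

Lemma rank_ord_of c d : rank_ord (rank_of c) (rank_of d) <-> rank_lt c d.
Proof.
  split; [|intro H; exists c, d; auto].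
  intros (c' & d' & Ec & Ed & H).
  apply rank_of_eq in Ec as [Hcc' _]. apply rank_of_eq in Ed as [_ Hd'd].
  eapply rank_le_lt_trans; [exact Hcc'|]. eapply rank_lt_le_trans; eauto.
Qed.

Lemma rank_ord_wellorder : strict_wellorder rank_ord.
Proof.
  constructor.
  - intro P. destruct (rank_of_surj P) as [d ->].
    induction (rank_lt_wf d) as [d _ IH]. constructor. intros Q HQ.
    destruct (rank_of_surj Q) as [c ->]. apply IH, rank_ord_of, HQ.
  - intros P H. destruct (rank_of_surj P) as [c ->].
    apply rank_ord_of in H. exact (rank_lt_irrefl _ H).
  - intros P Q R. destruct (rank_of_surj P) as [a ->], (rank_of_surj Q) as [b ->],
      (rank_of_surj R) as [c ->].
    rewrite !rank_ord_of. intros Hab Hbc. eapply rank_le_lt_trans; [apply rank_lt_le|]; eauto.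
  - intros P Q. destruct (rank_of_surj P) as [c ->], (rank_of_surj Q) as [d ->].
    rewrite !rank_ord_of.
    destruct (rank_le_or_lt c d) as [Hcd|]; [|auto].
    destruct (rank_le_or_lt d c) as [Hdc|]; [|auto].
    right; left. apply rank_of_eq. auto.
Qed.

Lemma ranks_below d : le_kappa_on (fun P => exists c, rank_le c d /\ P = rank_of c).
Proof.
  induction d as [| |g IH].
  1, 2: apply le_kappa_on_sub with (S' := fun P => P = rank_of Emp);
    [|apply le_kappa_on_singleton];
    intros P [[| |f] [Hc ->]]; [reflexivity | apply rank_of_eq; simpl; auto | destruct Hc].
  apply le_kappa_on_sub with
    (S' := fun P => exists b : bool, if b then P = rank_of (Nor g)
                                     else exists j c, rank_le c (g j) /\ P = rank_of c).
  - intros P [c [Hc ->]]. destruct (rank_le_or_lt (Nor g) c) as [H|[j Hj]].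
    + exists true. apply rank_of_eq. auto.
    + exists false. exists j, c. auto.
  - apply le_kappa_on_union; [exact le_kappa_bool|]. intros [|].
    + apply le_kappa_on_singleton.
    + apply le_kappa_on_union; [exact le_kappa_K | exact IH].
Qed.

Lemma rank_le_kappa_plus : le_kappa_plus K rank.
Proof.
  exists rank_ord. split; [exact rank_ord_wellorder|]. intro Q.
  destruct (rank_of_surj Q) as [d ->]. apply le_kappa_on_sig.
  apply le_kappa_on_sub with (2 := ranks_below d).
  intros P HP. destruct (rank_of_surj P) as [c ->]. apply rank_ord_of, rank_lt_le in HP.
  exists c. auto.
Qed.

(** * Rank-bounded pieces of the diagonal set *)

(* Recursion on the rank bound [d]; [h] relocates positions so that a subtree
   of the coded tree can be read. *)
Fixpoint codes_le (d : code) (h : K -> K) (x : K -> K) : Prop :=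
  x (h (slot 0)) = natK 0 \/ x (h (slot 0)) = natK 1 \/
  match d with
  | Nor g => x (h (slot 0)) = natK 2 /\
             forall i, exists j, codes_le (g j) (fun z => h (child_pos i z)) x
  | _ => False
  end.

Fixpoint sem_le (d : code) (h : K -> K) (x : K -> K) : Prop :=
  (x (h (slot 0)) = natK 1 /\ x (x (h (slot 1))) = x (h (slot 2))) \/
  match d with
  | Nor g => x (h (slot 0)) = natK 2 /\
             (forall i, exists j, codes_le (g j) (fun z => h (child_pos i z)) x) /\
             ~ exists i j, sem_le (g j) (fun z => h (child_pos i z)) x
  | _ => False
  end.

Lemma codes_le_borel d : forall h, kappa_borel (codes_le d h).
Proof.
  induction d as [| |g IH]; intro h; simpl; repeat apply borel_or;
    try apply borel_eval; try apply borel_empty.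
  apply borel_and; [apply borel_eval|].
  apply borel_allK. intro i. apply borel_exK. intro j. apply IH.
Qed.

Lemma sem_le_borel d : forall h, kappa_borel (sem_le d h).
Proof.
  induction d as [| |g IH]; intro h; simpl; apply borel_or;
    try (apply borel_and; [apply borel_eval | apply borel_eval_eval]); try apply borel_empty.
  apply borel_and; [apply borel_eval|]. apply borel_and.
  - apply borel_allK. intro i. apply borel_exK. intro j. apply codes_le_borel.
  - apply borel_compl. apply borel_exK. intro i. apply borel_exK. intro j. apply IH.
Qed.

Lemma codes_le_spec d : forall h x,
  codes_le d h x <-> exists c, rank_le c d /\ codes (fun z => x (h z)) c.
Proof.
  induction d as [| |g IH]; intros h x.
  1, 2: split;
    [ intros [Ht|[Ht|[]]]; [exists Emp | exists (Atom (x (h (slot 1))) (x (h (slot 2))))];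
      simpl; auto
    | intros [[| |f] [Hle Hc]]; simpl in *; [left; exact Hc | right; left; apply Hc | destruct Hle] ].
  split.
  - intros [Ht|[Ht|[Ht Hch]]];
      [exists Emp; simpl; auto | exists (Atom (x (h (slot 1))) (x (h (slot 2)))); simpl; auto |].
    assert (Hch' : forall i, exists c, (exists j, rank_le c (g j)) /\
                                        codes (fun z => x (h (child_pos i z))) c).
    { intro i. destruct (Hch i) as [j Hj]. apply IH in Hj as [c [Hc Hcodes]]. eauto. }
    destruct (choice _ Hch') as [f Hf].
    exists (Nor f). split; [intro i; apply Hf|]. split; [exact Ht | intro i; apply Hf].
  - intros [[| |f] [Hle Hc]]; simpl in *; [left; exact Hc | right; left; apply Hc |].
    right; right. split; [apply Hc|]. intro i. destruct (Hle i) as [j Hj].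
    exists j. apply IH. exists (f i). split; [exact Hj | apply Hc].
Qed.

Lemma sem_le_spec d : forall h x,
  sem_le d h x <-> exists c, rank_le c d /\ codes (fun z => x (h z)) c /\ sem c x.
Proof.
  induction d as [| |g IH]; intros h x.
  1, 2: split;
    [ intros [[Ht Hx]|[]]; exists (Atom (x (h (slot 1))) (x (h (slot 2)))); simpl; auto
    | intros [[| |f] (Hle & Hc & Hs)]; simpl in *;
      [destruct Hs | left; destruct Hc as (Ht & -> & ->); auto | destruct Hle] ].
  split.
  - intros [[Ht Hx]|(Ht & Hch & Hnot)];
      [exists (Atom (x (h (slot 1))) (x (h (slot 2)))); simpl; auto |].
    destruct (proj1 (codes_le_spec (Nor g) h x) (or_intror (or_intror (conj Ht Hch))))
      as [c [Hle Hc]].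
    exists c. split; [exact Hle|]. split; [exact Hc|].
    destruct c as [| |f]; pose proof (codes_tag Hc) as Htag; cbv beta in Htag;
      rewrite Ht in Htag; apply natK_inj in Htag; try discriminate Htag.
    intros [i Hi]. apply Hnot. destruct (Hle i) as [j Hj].
    exists i, j. apply IH. exists (f i). split; [exact Hj|]. split; [apply Hc | exact Hi].
  - intros [[| |f] (Hle & Hc & Hs)]; simpl in *;
      [destruct Hs | left; destruct Hc as (Ht & -> & ->); auto |].
    right. split; [apply Hc|]. split.
    + intro i. destruct (Hle i) as [j Hj].
      exists j. apply codes_le_spec. exists (f i). split; [exact Hj | apply Hc].
    + intros (i & j & Hij). apply IH in Hij as (c & _ & Hc' & Hsc).
      apply Hs. exists i. rewrite (codes_unique (proj2 Hc i) Hc'). exact Hsc.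
Qed.

Definition diag_le (d : code) (x : K -> K) : Prop :=
  exists c, rank_le c d /\ codes x c /\ ~ sem c x.

Lemma diag_le_borel d : kappa_borel (diag_le d).
Proof.
  apply borel_ext with (fun x => codes_le d (fun z => z) x /\ ~ sem_le d (fun z => z) x).
  - apply borel_and; [apply codes_le_borel | apply borel_compl, sem_le_borel].
  - intro x. rewrite codes_le_spec, sem_le_spec. split.
    + intros [[c [Hle Hc]] Hnot]. exists c. repeat split; auto.
      intro Hs. apply Hnot. exists c. auto.
    + intros (c & Hle & Hc & Hs). split; [exists c; auto|].
      intros (c' & _ & Hc' & Hs'). rewrite (codes_unique Hc Hc') in Hs. exact (Hs Hs').
Qed.

Lemma diag_kappa_plus_borel : borel K (le_kappa_plus K) diag.
Proof.
  set (slice := fun (P : rank) x => exists d, P = rank_of d /\ diag_le d x).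
  apply borel_ext with (fun x => exists P, slice P x).
  - apply borel_union; [exact rank_le_kappa_plus|]. intro P.
    apply borel_mono with (le_kappa K); [exact le_kappa_le_kappa_plus|].
    destruct (rank_of_surj P) as [d0 ->].
    apply borel_ext with (diag_le d0); [apply diag_le_borel|]. intro x. split.
    + intro Hx. exists d0. auto.
    + intros (d & Ed & c & Hle & Hx). apply rank_of_eq in Ed as [_ Hdd0].
      exists c. split; [eapply rank_le_trans; eauto | exact Hx].
  - intro x. split.
    + intros [P (d & _ & c & _ & Hx)]. exists c. exact Hx.
    + intros [c Hx]. exists (rank_of c), c. split; [reflexivity|].
      exists c. split; [apply rank_le_refl | exact Hx].
Qed.

End RegularCardinal.

Theorem corollary3p19 (K : Type) (lt : K -> K -> Prop)
  (hK : regular_cardinal lt) :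
  exists A : (K -> K) -> Prop,
    borel K (le_kappa_plus K) A /\ ~ borel K (le_kappa K) A.
Proof.
  exists (diag K lt hK). split.
  - exact (diag_kappa_plus_borel K lt hK).
  - exact (diag_not_kappa_borel K lt hK).
Qed.
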